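(* Let $u\in S$. Then there exist $(\varepsilon_i)_{i\ge4}$ and $(\varepsilon'_i)_{i\ge4}$ in $\mathcal{D}^\infty$ such that $\sum_{i=4}^\infty\varepsilon_i\alpha^i=u+\sum_{i=4}^\infty\varepsilon'_i\alpha^i$.
   Context: Let $P(x)=x^4-x^3-x^2-x-1$. Its roots are $\beta=\beta_1\approx 1.9275$, a real root $\beta_2\approx-0.7748$, and a pair of complex conjugate roots $\beta_3\approx-0.0763+0.8147i$ and $\overline{\beta_3}$. For $i\in\mathbb{Z}$ put $\alpha^i=(\beta_2^i,\beta_3^i)\in\mathbb{R}\times\mathbb{C}$, with $\alpha^0=1=(1,1)$; arithmetic is componentwise and an integer $n$ is identified with $(n,n)$. $\mathcal{D}^\infty$ is the set of sequences $(\varepsilon_i)_{i\ge l}$, $l\in\mathbb{Z}$, with $\varepsilon_i\in\{0,1\}$ and containing no four consecutive $1$'s. $S$ is the set $\{\pm\sum_{i=0}^3c_i\alpha^i : c_i\in\{0,1\},\ c_0c_1c_2c_3\neq1111\}\cup\{\pm(\alpha^{-1}+1+\alpha^2),\pm(\alpha^{-2}+\alpha^{-1}+\alpha),\pm(\alpha^{-3}+\alpha^{-2}+1+\alpha^3)\}$. *)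

From Stdlib Require Import Reals ZArith.
From Coquelicot Require Import Coquelicot.
Open Scope R_scope.

Definition P_R (x : R) : R := x^4 - x^3 - x^2 - x - 1.
Definition P_C (z : C) : C :=
  Cminus (Cminus (Cminus (Cminus (Cpow z 4) (Cpow z 3)) (Cpow z 2)) z) (RtoC 1).

Definition CpowZ (z : C) (k : Z) : C :=
  match k with
  | Z0 => RtoC 1
  | Zpos p => Cpow z (Pos.to_nat p)
  | Zneg p => Cinv (Cpow z (Pos.to_nat p))
  end.

(* alpha^k = (beta2^k, beta3^k) in R x C; arithmetic componentwise. *)
Definition RC := (R * C)%type.
Definition alpha (b2 : R) (b3 : C) (k : Z) : RC := (powerRZ b2 k, CpowZ b3 k).
Definition RCadd (u v : RC) : RC := (fst u + fst v, Cplus (snd u) (snd v)).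
Definition RCopp (u : RC) : RC := (- fst u, Copp (snd u)).
Definition RCzero : RC := (0, RtoC 0).
Definition RCone : RC := (1, RtoC 1).
Definition b2R (b : bool) : R := if b then 1 else 0.
Definition RCscal (b : bool) (u : RC) : RC := if b then u else RCzero.

Definition inS (b2 : R) (b3 : C) (u : RC) : Prop :=
  (exists (c0 c1 c2 c3 : bool) (neg : bool),
      ~ (c0 = true /\ c1 = true /\ c2 = true /\ c3 = true) /\
      let v := RCadd (RCscal c0 (alpha b2 b3 0))
               (RCadd (RCscal c1 (alpha b2 b3 1))
               (RCadd (RCscal c2 (alpha b2 b3 2)) (RCscal c3 (alpha b2 b3 3)))) in
      u = (if neg then RCopp v else v))
  \/ (let v := RCadd (alpha b2 b3 (-1)) (RCadd RCone (alpha b2 b3 2)) in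
      u = v \/ u = RCopp v)
  \/ (let v := RCadd (alpha b2 b3 (-2)) (RCadd (alpha b2 b3 (-1)) (alpha b2 b3 1)) in
      u = v \/ u = RCopp v)
  \/ (let v := RCadd (alpha b2 b3 (-3)) (RCadd (alpha b2 b3 (-2))
               (RCadd RCone (alpha b2 b3 3))) in
      u = v \/ u = RCopp v).

(* A sequence (eps_i)_{i >= 4} of 0/1 digits (given as eps : nat -> bool,
   values at i < 4 ignored) lies in D^infty: no four consecutive 1's. *)
Definition in_Dinf4 (eps : nat -> bool) : Prop :=
  forall i : nat, (4 <= i)%nat ->
    ~ (eps i = true /\ eps (i+1)%nat = true /\ eps (i+2)%nat = true /\ eps (i+3)%nat = true).

Definition tail_sum (b2 : R) (b3 : C) (eps : nat -> bool) (L : RC) : Prop :=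
  is_series (fun n : nat => b2R (eps (n+4)%nat) * b2 ^ (n+4)) (fst L) /\
  @is_series R_AbsRing C_R_NormedModule
    (fun n : nat => Cmult (RtoC (b2R (eps (n+4)%nat))) (Cpow b3 (n+4))) (snd L).

(* An eventually periodic digit sequence, with digits eps_4..eps_7 followed by a
   block of four digits repeated forever, has tail sum
   [sum_(i<4) eps_(4+i) z^(4+i) + (sum_(i<4) eps_(8+i) z^(8+i)) / (1 - z^4)] at
   every [|z| < 1]; both conjugates beta2 and beta3 lie in the open unit disc.  So
   it suffices to exhibit, for each u in S, two admissible such sequences whose
   closed forms differ by u modulo P.  For u = sum c_k alpha^k one repeats the
   block c_0 c_1 c_2 c_3 and subtracts the same block shifted by one place: this is
   alpha^k = sum_(n>=1) (alpha^(k+4n) - alpha^(k+4n+1)), which amounts to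
   (alpha - 1) P(alpha) = alpha^5 - 2 alpha^4 + 1 = 0.  The real coordinate is the
   real part of the same identity at the complex point beta2. *)

From Stdlib Require Import Reals ZArith Lra Lia Psatz Bool List.
From Coquelicot Require Import Coquelicot.
Import ListNotations.
Open Scope R_scope.

Lemma real_root_abs_lt_1 (x : R) : P_R x = 0 -> x < 0 -> Rabs x < 1.
Proof. unfold P_R. intros HP Hx. rewrite Rabs_left by lra. nra. Qed.

(* Combining the equations gives s (r^2 + 1) = r^2 - r, so r >= 1 would force
   0 <= s < 1; but the first one says r^2 - 1 = r (s^2 - s - 1), which is then < 0. *)
Lemma quadratic_factor_root_bound (s r : R) : 0 < r ->
  r ^ 2 - r * s ^ 2 + s * r + r - 1 = 0 ->
  s ^ 3 - 2 * s * r - s ^ 2 + r - s - 1 = 0 -> r < 1.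
Proof.
  intros Hr H0 H1.
  assert (Hs : s * (r ^ 2 + 1) - (r ^ 2 - r)
               = - (s * (r ^ 2 - r * s ^ 2 + s * r + r - 1)
                    + r * (s ^ 3 - 2 * s * r - s ^ 2 + r - s - 1))) by ring.
  assert (Hr2 : r * (s ^ 2 - s - 1) - (r ^ 2 - 1) = - (r ^ 2 - r * s ^ 2 + s * r + r - 1))
    by ring.
  rewrite H0, H1 in Hs. rewrite H0 in Hr2.
  destruct (Rlt_or_le r 1) as [| Hr1]; [assumption | exfalso].
  assert (0 <= s < 1) by (split; nra).
  nra.
Qed.

(* With s = z + conj z and r = |z|^2, the remainder of P modulo x^2 - s x + r is
   A x + B with A, B the two polynomials in s, r below; a nonreal root forces A = B = 0. *)
Lemma nonreal_root_Cmod_lt_1 (z : C) : P_C z = 0%C -> Im z <> 0 -> Cmod z < 1.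
Proof.
  destruct z as [a b]. intros HP Hb. simpl in Hb.
  set (s := 2 * a). set (r := a ^ 2 + b ^ 2).
  assert (Him : Im (P_C (a, b)) = b * (s ^ 3 - 2 * s * r - s ^ 2 + r - s - 1))
    by (unfold P_C, s, r; simpl; ring).
  assert (Hre : Re (P_C (a, b))
                = r ^ 2 - r * s ^ 2 + s * r + r - 1 + a * (s ^ 3 - 2 * s * r - s ^ 2 + r - s - 1))
    by (unfold P_C, s, r; simpl; ring).
  rewrite HP, im_RtoC in Him. rewrite HP, re_RtoC in Hre.
  assert (H1 : s ^ 3 - 2 * s * r - s ^ 2 + r - s - 1 = 0).
  { destruct (Rmult_integral b _ (eq_sym Him)); [contradiction | assumption]. }
  assert (H0 : r ^ 2 - r * s ^ 2 + s * r + r - 1 = 0) by (rewrite H1 in Hre; lra).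
  assert (Hr : r < 1).
  { apply (quadratic_factor_root_bound s); auto.
    pose proof (Rsqr_pos_lt b Hb). unfold r, Rsqr in *. nra. }
  unfold Cmod. cbn [fst snd]. rewrite <- sqrt_1. apply sqrt_lt_1_alt.
  split; [unfold r; nra | exact Hr].
Qed.

Lemma P_C_RtoC (x : R) : P_C (RtoC x) = RtoC (P_R x).
Proof. unfold P_C, P_R. now rewrite !RtoC_minus, !RtoC_pow. Qed.

Lemma P_C_root_pow4 (z : C) : P_C z = 0%C -> (z ^ 4 = z ^ 3 + z ^ 2 + z + 1)%C.
Proof.
  unfold P_C. intros H.
  transitivity (z ^ 4 - (z ^ 4 - z ^ 3 - z ^ 2 - z - 1))%C; [| ring].
  rewrite H. ring.
Qed.

Lemma P_C_root_neq_0 (z : C) : P_C z = 0%C -> z <> 0%C.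
Proof.
  intros H ->.
  assert (E : P_C 0 = (- 1)%C) by (unfold P_C; ring).
  rewrite E in H. apply (f_equal Re) in H. simpl in H. lra.
Qed.

Lemma Cpow4_neq_1 (z : C) : Cmod z < 1 -> (1 - z ^ 4 <> 0)%C.
Proof.
  intros Hz H.
  assert (H1 : (z ^ 4 = 1)%C)
    by (replace (z ^ 4)%C with (1 - (1 - z ^ 4))%C by ring; rewrite H; ring).
  apply (f_equal Cmod) in H1. rewrite Cmod_pow, Cmod_1 in H1.
  assert (Cmod z ^ 4 < 1) by (apply pow_lt_1_compat; [split; [apply Cmod_ge_0 | lra] | lia]).
  lra.
Qed.

Definition word := (list bool * list bool)%type.

(* [fst w] lists eps_4..eps_7 and [snd w] the block repeated from eps_8 on; the
   values at i < 4 are junk, ignored by [in_Dinf4] and [tail_sum]. *)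
Definition word_digits (w : word) (i : nat) : bool :=
  if (i <? 8)%nat then nth (i - 4) (fst w) false else nth ((i - 8) mod 4) (snd w) false.

Lemma word_digits_periodic (w : word) (n : nat) :
  word_digits w (n + 12) = word_digits w (n + 8).
Proof.
  unfold word_digits.
  rewrite (proj2 (Nat.ltb_ge _ _)), (proj2 (Nat.ltb_ge _ _)) by lia.
  replace (n + 12 - 8)%nat with (n + 1 * 4)%nat by lia.
  replace (n + 8 - 8)%nat with n by lia.
  now rewrite Nat.Div0.mod_add.
Qed.

Definition four_ones (eps : nat -> bool) (i : nat) : bool :=
  eps i && eps (i + 1)%nat && eps (i + 2)%nat && eps (i + 3)%nat.

Definition admissible (w : word) : bool :=
  forallb (fun i => negb (four_ones (word_digits w) i)) (seq 4 8).

Lemma four_ones_periodic (w : word) (n : nat) :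
  four_ones (word_digits w) (n + 12) = four_ones (word_digits w) (n + 8).
Proof.
  unfold four_ones.
  rewrite <- !Nat.add_assoc, !(Nat.add_comm 12), !(Nat.add_comm 8), !Nat.add_assoc.
  now rewrite !word_digits_periodic.
Qed.

Lemma admissible_in_Dinf4 (w : word) : admissible w = true -> in_Dinf4 (word_digits w).
Proof.
  intros Hw.
  assert (Hwin : forall i, (4 <= i)%nat -> four_ones (word_digits w) i = false).
  { induction i as [i IH] using lt_wf_ind; intros Hi.
    destruct (Nat.lt_ge_cases i 12) as [Hlt | Hge].
    - apply forallb_forall with (x := i) in Hw; [now apply negb_true_iff |].
      apply in_seq; lia.
    - replace i with (i - 12 + 12)%nat by lia.
      rewrite four_ones_periodic. apply IH; lia. }
  intros i Hi (H0 & H1 & H2 & H3).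
  specialize (Hwin i Hi). unfold four_ones in Hwin.
  rewrite H0, H1, H2, H3 in Hwin. discriminate.
Qed.

Lemma is_series_shift {K : AbsRing} {V : NormedModule K} (t : nat -> V) (l : V) (n : nat) :
  is_series t l -> is_series (fun k => t (S n + k)%nat) (minus l (sum_n t n)).
Proof.
  intros Ht. apply is_series_incr_n; [lia |]. simpl.
  unfold minus. now rewrite <- plus_assoc, (plus_opp_l (G := V)), plus_zero_r.
Qed.

Lemma is_series_periodic_tail {K : AbsRing} {V : NormedModule K} (t : nat -> V) (c : K) (l : V) :
  is_series t l -> (forall n, t (8 + n)%nat = scal c (t (4 + n)%nat)) ->
  minus l (sum_n t 7) = scal c (minus l (sum_n t 3)).
Proof.
  intros Ht Hper.
  assert (H8 : is_series (fun n => scal c (t (4 + n)%nat)) (minus l (sum_n t 7))).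
  { eapply is_series_ext; [exact Hper | exact (is_series_shift t l 7 Ht)]. }
  exact (filterlim_locally_unique _ _ _ H8 (is_series_scal c _ _ (is_series_shift t l 3 Ht))).
Qed.

Definition tail_term (eps : nat -> bool) (z : C) (n : nat) : C :=
  Cmult (RtoC (b2R (eps (n + 4)%nat))) (Cpow z (n + 4)).

Definition tail_block (eps : nat -> bool) (z : C) (k : nat) : C :=
  (tail_term eps z k + tail_term eps z (k + 1) + tail_term eps z (k + 2)
   + tail_term eps z (k + 3))%C.

Definition tail_value (eps : nat -> bool) (z : C) : C :=
  (tail_block eps z 0 + tail_block eps z 4 / (1 - z ^ 4))%C.

Lemma ex_series_tail_term (eps : nat -> bool) (z : C) :
  Cmod z < 1 -> ex_series (tail_term eps z).
Proof.
  intros Hz. pose proof (Cmod_ge_0 z) as Hz0.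
  apply (@ex_series_le C_AbsRing C_CompleteNormedModule _ (fun n => Cmod z ^ n)).
  - intros n. change (norm (tail_term eps z n)) with (Cmod (tail_term eps z n)).
    unfold tail_term. rewrite Cmod_mult, Cmod_pow, Cmod_R, pow_add.
    assert (Hd : 0 <= Rabs (b2R (eps (n + 4)%nat)) <= 1)
      by (destruct (eps _); simpl; rewrite ?Rabs_R0, ?Rabs_R1; lra).
    assert (H4 : 0 <= Cmod z ^ 4 < 1) by (apply pow_lt_1_compat; [lra | lia]).
    pose proof (pow_le _ n Hz0).
    apply Rle_trans with (1 * (Cmod z ^ n * 1)); [| lra].
    apply Rmult_le_compat; [lra | apply Rmult_le_pos | lra | apply Rmult_le_compat_l]; lra.
  - apply ex_series_geom. now rewrite Rabs_pos_eq.
Qed.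

Lemma sum_n_tail_term (eps : nat -> bool) (z : C) :
  sum_n (tail_term eps z) 3 = tail_block eps z 0 /\
  sum_n (tail_term eps z) 7 = (tail_block eps z 0 + tail_block eps z 4)%C.
Proof.
  unfold tail_block. rewrite !sum_Sn, sum_O. split; simpl; unfold plus; simpl; ring.
Qed.

Lemma is_series_tail_value (eps : nat -> bool) (z : C) :
  Cmod z < 1 -> (forall n, eps (n + 12)%nat = eps (n + 8)%nat) ->
  is_series (tail_term eps z) (tail_value eps z).
Proof.
  intros Hz Hper.
  destruct (ex_series_tail_term eps z Hz) as [l Hl]. change C in l.
  enough (Hval : l = tail_value eps z) by (rewrite <- Hval; exact Hl).
  assert (Hshift : forall n,
             tail_term eps z (8 + n)%nat = scal (z ^ 4)%C (tail_term eps z (4 + n)%nat)).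
  { intros n. unfold tail_term. change (scal ?a ?b) with (Cmult a b).
    replace (8 + n + 4)%nat with (n + 12)%nat by lia.
    replace (4 + n + 4)%nat with (n + 8)%nat by lia.
    rewrite Hper. replace (n + 12)%nat with (4 + (n + 8))%nat by lia.
    rewrite Cpow_add_r. ring. }
  pose proof (is_series_periodic_tail _ _ _ Hl Hshift) as E.
  change (l - sum_n (tail_term eps z) 7 = z ^ 4 * (l - sum_n (tail_term eps z) 3))%C in E.
  destruct (sum_n_tail_term eps z) as [H3 H7]. rewrite H3, H7 in E.
  assert (Hb4 : (tail_block eps z 4 = (l - tail_block eps z 0) * (1 - z ^ 4))%C).
  { transitivity ((l - tail_block eps z 0) - (l - (tail_block eps z 0 + tail_block eps z 4)))%C;
      [ring | rewrite E; ring]. }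
  unfold tail_value. rewrite Hb4. field. now apply Cpow4_neq_1.
Qed.

Lemma filterlim_Re (v : C) : filterlim Re (locally v) (locally (Re v)).
Proof. intros P [eps HP]. exists eps. intros y [Hy _]. exact (HP _ Hy). Qed.

Lemma is_series_Re (a : nat -> R) (v : C) :
  is_series (fun n => RtoC (a n)) v -> is_series a (Re v).
Proof.
  intros Hv. unfold is_series.
  apply filterlim_ext with (fun N => Re (sum_n (fun n => RtoC (a n)) N)).
  - intros N. induction N as [| N IH]; [now rewrite !sum_O |].
    rewrite !sum_Sn.
    change (Re (sum_n (fun n => RtoC (a n)) N + RtoC (a (S N)))%C = plus (sum_n a N) (a (S N))).
    rewrite re_plus, IH. reflexivity.
  - eapply filterlim_comp; [exact Hv | apply filterlim_Re].
Qed.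

Definition tail_point (b2 : R) (b3 : C) (eps : nat -> bool) : RC :=
  (Re (tail_value eps (RtoC b2)), tail_value eps b3).

Lemma tail_sum_tail_point (b2 : R) (b3 : C) (eps : nat -> bool) :
  Rabs b2 < 1 -> Cmod b3 < 1 -> (forall n, eps (n + 12)%nat = eps (n + 8)%nat) ->
  tail_sum b2 b3 eps (tail_point b2 b3 eps).
Proof.
  intros Hb2 Hb3 Hper. split; unfold tail_point, fst, snd.
  - apply is_series_Re.
    eapply is_series_ext; [| apply is_series_tail_value; [now rewrite Cmod_R | exact Hper]].
    intros n. unfold tail_term. now rewrite RtoC_mult, RtoC_pow.
  - exact (is_series_tail_value eps b3 Hb3 Hper).
Qed.

Inductive S_elem : Type :=
  | S_digits (c0 c1 c2 c3 : bool)
  | S_extra1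
  | S_extra2
  | S_extra3.

Definition S_admissible (s : S_elem) : Prop :=
  match s with S_digits true true true true => False | _ => True end.

Definition digit_term (c : bool) (z : C) (k : Z) : C := if c then CpowZ z k else RtoC 0.

Definition S_eval (s : S_elem) (z : C) : C :=
  match s with
  | S_digits c0 c1 c2 c3 =>
      digit_term c0 z 0 + (digit_term c1 z 1 + (digit_term c2 z 2 + digit_term c3 z 3))
  | S_extra1 => CpowZ z (-1) + (1 + CpowZ z 2)
  | S_extra2 => CpowZ z (-2) + (CpowZ z (-1) + CpowZ z 1)
  | S_extra3 => CpowZ z (-3) + (CpowZ z (-2) + (1 + CpowZ z 3))
  end%C.

Definition S_point (b2 : R) (b3 : C) (s : S_elem) : RC :=
  (Re (S_eval s (RtoC b2)), S_eval s b3).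

Lemma powerRZ_Re_CpowZ (x : R) (k : Z) : x <> 0 -> powerRZ x k = Re (CpowZ (RtoC x) k).
Proof.
  intros Hx. destruct k as [| p | p]; unfold powerRZ, CpowZ.
  - reflexivity.
  - now rewrite <- RtoC_pow, re_RtoC.
  - now rewrite <- RtoC_pow, <- RtoC_inv, re_RtoC by (apply pow_nonzero; exact Hx).
Qed.

Lemma RCadd_Re (x x' y y' : C) : RCadd (Re x, y) (Re x', y') = (Re (x + x'), (y + y')%C).
Proof. unfold RCadd. cbn [fst snd]. now rewrite re_plus. Qed.

Lemma RCscal_Re (c : bool) (x y : C) :
  RCscal c (Re x, y) = (Re (if c then x else RtoC 0), if c then y else RtoC 0).
Proof. now destruct c. Qed.

Lemma inS_cases (b2 : R) (b3 : C) (u : RC) :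
  b2 <> 0 -> inS b2 b3 u ->
  exists (s : S_elem) (neg : bool), S_admissible s /\
    u = if neg then RCopp (S_point b2 b3 s) else S_point b2 b3 s.
Proof.
  intros Hb2 Hu.
  assert (Halpha : forall k, alpha b2 b3 k = (Re (CpowZ (RtoC b2) k), CpowZ b3 k))
    by (intros k; unfold alpha; now rewrite powerRZ_Re_CpowZ).
  assert (Hone : RCone = alpha b2 b3 0) by reflexivity.
  destruct Hu as [(c0 & c1 & c2 & c3 & neg & Hc & Hu) | [Hu | [Hu | Hu]]];
    cbv zeta in Hu; rewrite ?Hone, !Halpha, ?RCscal_Re, !RCadd_Re in Hu.
  - exists (S_digits c0 c1 c2 c3), neg.
    split; [destruct c0, c1, c2, c3; cbn; tauto | exact Hu].
  - exists S_extra1. destruct Hu as [-> | ->]; [exists false | exists true]; easy.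
  - exists S_extra2. destruct Hu as [-> | ->]; [exists false | exists true]; easy.
  - exists S_extra3. destruct Hu as [-> | ->]; [exists false | exists true]; easy.
Qed.

(* Modulo P the first two extra elements equal alpha^3 - alpha and alpha^2 - 1;
   their witnesses apply the shift of the digit case termwise, with the two words
   exchanged for the negative term. *)
Definition S_witness (s : S_elem) : word * word :=
  match s with
  | S_digits c0 c1 c2 c3 => (([c0; c1; c2; c3], [c0; c1; c2; c3]),
                             ([false; c0; c1; c2], [c3; c0; c1; c2]))
  | S_extra1 => (([false; false; true; true], [false; false; true; true]),
                 ([false; true; false; false], [true; true; false; false]))
  | S_extra2 => (([false; true; true; false], [false; true; true; false]),
                 ([true; false; false; true], [true; false; false; true]))
  | S_extra3 => (([true; true; false; false], [true; true; false; false]),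
                 ([false; false; true; true], [false; false; true; true]))
  end.

Lemma S_witness_admissible (s : S_elem) :
  S_admissible s ->
  admissible (fst (S_witness s)) = true /\ admissible (snd (S_witness s)) = true.
Proof. destruct s as [[] [] [] [] | | |]; easy. Qed.

(* [field [H4]] normalises modulo the rewrite rule z^4 -> z^3 + z^2 + z + 1. *)
Lemma S_witness_value (s : S_elem) (z : C) :
  S_admissible s -> P_C z = 0%C -> Cmod z < 1 ->
  tail_value (word_digits (fst (S_witness s))) z
  = (S_eval s z + tail_value (word_digits (snd (S_witness s))) z)%C.
Proof.
  intros Hs Hz Hmod.
  pose proof (P_C_root_pow4 z Hz) as H4.
  pose proof (P_C_root_neq_0 z Hz) as Hz0.
  pose proof (Cpow4_neq_1 z Hmod) as H1.
  destruct s as [[] [] [] [] | | |]; try contradiction;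
    unfold tail_value, tail_block, tail_term, word_digits;
    cbn -[Cpow]; unfold Pos.to_nat; cbn -[Cpow];
    field [H4]; auto.
Qed.

Definition tail_difference (b2 : R) (b3 : C) (u : RC) : Prop :=
  exists (eps eps' : nat -> bool) (L L' : RC),
    in_Dinf4 eps /\ in_Dinf4 eps' /\
    tail_sum b2 b3 eps L /\ tail_sum b2 b3 eps' L' /\
    L = RCadd u L'.

Lemma tail_difference_opp (b2 : R) (b3 : C) (u : RC) :
  tail_difference b2 b3 u -> tail_difference b2 b3 (RCopp u).
Proof.
  intros (eps & eps' & L & L' & H & H' & HL & HL' & ->).
  exists eps', eps, L', (RCadd u L'). do 4 (split; [assumption |]).
  destruct u, L'. unfold RCadd, RCopp. cbn [fst snd]. f_equal; ring.
Qed.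

Lemma tail_difference_of_words (b2 : R) (b3 : C) (w w' : word) (v : C -> C) :
  Rabs b2 < 1 -> Cmod b3 < 1 -> admissible w = true -> admissible w' = true ->
  (forall z, z = RtoC b2 \/ z = b3 ->
     tail_value (word_digits w) z = (v z + tail_value (word_digits w') z)%C) ->
  tail_difference b2 b3 (Re (v (RtoC b2)), v b3).
Proof.
  intros Hb2 Hb3 Hw Hw' Hv.
  exists (word_digits w), (word_digits w'),
    (tail_point b2 b3 (word_digits w)), (tail_point b2 b3 (word_digits w')).
  split; [| split; [| split; [| split]]].
  - now apply admissible_in_Dinf4.
  - now apply admissible_in_Dinf4.
  - apply tail_sum_tail_point; auto using word_digits_periodic.
  - apply tail_sum_tail_point; auto using word_digits_periodic.
  - unfold tail_point. rewrite (Hv (RtoC b2)), (Hv b3) by auto.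
    unfold RCadd. cbn [fst snd]. now rewrite re_plus.
Qed.

Theorem lemma3p6 (b2 : R) (b3 : C)
  (hb2 : P_R b2 = 0) (hb2neg : b2 < 0)
  (hb3 : P_C b3 = RtoC 0) (hb3im : 0 < Im b3)
  (u : RC) (hu : inS b2 b3 u) :
  exists (eps eps' : nat -> bool) (L L' : RC),
    in_Dinf4 eps /\ in_Dinf4 eps' /\
    tail_sum b2 b3 eps L /\ tail_sum b2 b3 eps' L' /\
    L = RCadd u L'.
Proof.
  change (tail_difference b2 b3 u).
  pose proof (real_root_abs_lt_1 b2 hb2 hb2neg) as Hb2.
  pose proof (nonreal_root_Cmod_lt_1 b3 hb3 (Rgt_not_eq _ _ hb3im)) as Hb3.
  destruct (inS_cases b2 b3 u (Rlt_not_eq _ _ hb2neg) hu) as (s & neg & Hs & ->).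
  assert (Hrep : tail_difference b2 b3 (S_point b2 b3 s)).
  { destruct (S_witness_admissible s Hs) as [Hw Hw'].
    apply (tail_difference_of_words _ _ _ _ _ Hb2 Hb3 Hw Hw').
    intros z [-> | ->]; apply S_witness_value; auto.
    - now rewrite P_C_RtoC, hb2.
    - now rewrite Cmod_R. }
  destruct neg; [apply tail_difference_opp |]; exact Hrep.
Qed.
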